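(* Let $G=(V,E)$ be a graph, let $c\ge1$ and $\epsilon\in[0,1/3)$, and let $\kappa(G)=(V,\kappa(E))$ be an $(\epsilon,c)$-kernel of $G$. If $M$ is a matching in $\kappa(G)$ such that every augmenting path in $\kappa(G)$ with respect to $M$ has length at least five, then the size of a maximum matching in $G$ is at most $(3+3\epsilon)|M|$.
   Context: Let $\mathcal N_v$ denote the set of neighbors of $v$ in $G$. A subgraph $\kappa(G)=(V,\kappa(E))$ with $\kappa(E)\subseteq E$ is given, together with a partition of $V$ into tight nodes $\kappa_T(V)$ and slack nodes $\kappa_S(V)$. For $v\in V$ let $\kappa(\mathcal N_v)=\{u\in\mathcal N_v:(u,v)\in\kappa(E)\}$ (the friends of $v$). For $c\ge1$ and $\epsilon\in[0,1/3)$, $\kappa(G)$ is an $(\epsilon,c)$-kernel of $G$ (w.r.t. this partition) iff: (i) $|\kappa(\mathcal N_v)|\le(1+\epsilon)c$ for all $v\in V$; (ii) $|\kappa(\mathcal N_v)|\ge(1-\epsilon)c$ for all $v\in\kappa_T(V)$; (iii) for all $u,v\in\kappa_S(V)$, if $(u,v)\in E$ then $(u,v)\in\kappa(E)$. Given a matching $M$ in a graph $H$, an augmenting path of length $2k+1$ ($k \ge 0$) is a simple path in $H$ with $2k+1$ edges whose two end nodes are unmatched in $M$ and whose edges alternate between non-$M$ and $M$ edges (first and last edges not in $M$). *)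

From HB Require Import structures.
From mathcomp Require Import all_boot all_order all_algebra.
Set Implicit Arguments. Unset Strict Implicit. Unset Printing Implicit Defensive.
Import Order.TTheory GRing.Theory Num.Theory.

Definition is_graph (T : finType) (e : rel T) : Prop := symmetric e /\ irreflexive e.

Definition nbrs (T : finType) (e : rel T) (v : T) : {set T} := [set u | e v u].

(* (eps,c)-kernel: ke is the edge relation of a subgraph kappa(G) of (T,e);
   tight nodes are [tight], slack nodes its complement. *)
Definition is_kernel (R : realFieldType) (T : finType) (e ke : rel T)
    (tight : {set T}) (eps c : R) : Prop :=
  [/\ symmetric ke, (forall u v, ke u v -> e u v),
      (forall v, (#|nbrs ke v|%:R <= (1 + eps) * c)%R),
      (forall v, v \in tight -> ((1 - eps) * c <= #|nbrs ke v|%:R)%R) &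
      (forall u v, u \notin tight -> v \notin tight -> e u v -> ke u v)].

Definition is_matching (T : finType) (e : rel T) (M : {set {set T}}) : Prop :=
  (forall A, A \in M -> exists u v, e u v /\ A = [set u; v]) /\
  (forall A B, A \in M -> B \in M -> A != B -> [disjoint A & B]).

Definition matched (T : finType) (M : {set {set T}}) (v : T) : bool :=
  [exists A in M, v \in A].

(* Augmenting path in (T,e) w.r.t. M, given as its vertex sequence p;
   it has (size p).-1 edges, which must be odd (2k+1). Edge number i
   (between p_i and p_(i+1), i from 0) lies in M iff i is odd. *)
Definition augmenting_path (T : finType) (e : rel T) (M : {set {set T}})
    (p : seq T) : Prop :=
  match p with
  | [::] => False
  | x :: q =>
      [/\ odd (size p).-1, uniq p, path e x q,
          ~~ matched M x && ~~ matched M (last x q) &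
          (forall i, i < (size p).-1 ->
            ([set nth x p i; nth x p i.+1] \in M) = odd i)]
  end.

From HB Require Import structures.
From mathcomp Require Import all_boot all_order all_algebra.
From mathcomp Require Import lra.

Set Implicit Arguments.
Unset Strict Implicit.
Unset Printing Implicit Defensive.

Import Order.TTheory GRing.Theory Num.Theory.

(* Call a vertex free if M does not cover it. Without augmenting paths of
   length 1 or 3, free vertices are pairwise non-adjacent in the kernel, and
   the two ends of a matched edge cannot have distinct free neighbours; hence
   every matched edge receives at most (1+eps)c kernel edges from free
   vertices. Double counting the edges between free and matched vertices
   bounds the number of free tight vertices by (1+eps)/(1-eps)|M| <= (1+3eps)|M|.
   Finally, an edge of a matching of G with both ends free and slack would be a
   kernel edge between free vertices, so every such edge meets one of the
   2|M| matched vertices or a free tight vertex. *)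

Section CardinalityCounting.

Variable T : finType.
Implicit Types (A B D : {set T}) (P M : {set {set T}}).

Lemma card_setI_sum A D : #|A :&: D| = \sum_(x in A) (x \in D).
Proof.
rewrite -sum1_card big_mkcond [RHS]big_mkcond /=; apply: eq_bigr => x _.
by rewrite inE; case: (x \in A); case: (x \in D).
Qed.

Lemma trivIset_card_le P D :
  trivIset P -> (forall A, A \in P -> A :&: D != set0) -> #|P| <= #|D|.
Proof.
move=> tiP meetD; rewrite -sum1_card.
apply: (@leq_trans (\sum_(A in P) #|A :&: D|)).
  by apply: leq_sum => A /meetD; rewrite card_gt0.
have -> : \sum_(A in P) #|A :&: D| = #|cover P :&: D|.
  by rewrite card_setI_sum big_trivIset //; apply: eq_bigr => A _; rewrite card_setI_sum.
exact/subset_leq_card/subsetIr.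
Qed.

Lemma sum_card_nbrsI (r : rel T) A B : symmetric r ->
  \sum_(u in A) #|nbrs r u :&: B| = \sum_(v in B) #|nbrs r v :&: A|.
Proof.
move=> r_sym.
have deg u C : #|nbrs r u :&: C| = \sum_(v in C) r u v.
  by rewrite setIC card_setI_sum; apply: eq_bigr => v _; rewrite inE.
rewrite (eq_bigr _ (fun u _ => deg u B)) exchange_big /=.
by apply: eq_bigr => v _; rewrite deg; apply: eq_bigr => u _; rewrite r_sym.
Qed.

Lemma matchedE M v : matched M v = (v \in cover M).
Proof.
apply/existsP/bigcupP => [[A /andP[AM vA]] | [A AM vA]]; exists A => //.
exact/andP.
Qed.

Lemma matching_trivIset (r : rel T) M : is_matching r M -> trivIset M.
Proof. by case=> _ M_disj; apply/trivIsetP => A B; exact: M_disj. Qed.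

Lemma card_cover_matching (r : rel T) M : is_matching r M -> #|cover M| <= 2 * #|M|.
Proof.
case=> M_edge _; apply: leq_trans (leq_card_cover M).1 _.
rewrite mulnC -sum_nat_const; apply: leq_sum => A /M_edge[u [v [_ ->]]].
by rewrite cards2; case: (u != v).
Qed.

End CardinalityCounting.

Section NoShortAugmentingPath.

Variables (T : finType) (r : rel T) (M : {set {set T}}).
Hypotheses (r_sym : symmetric r) (r_irr : irreflexive r)
  (M_matching : is_matching r M)
  (long_aug : forall p, augmenting_path r M p -> 5 <= (size p).-1).

Local Notation free v := (v \notin cover M).

Lemma notin_matching_of_free u (A : {set T}) : free u -> u \in A -> A \notin M.
Proof. by move=> uC uA; apply: contra uC => AM; apply/bigcupP; exists A. Qed.

Lemma free_nonadj u w : free u -> free w -> ~~ r u w.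
Proof.
move=> uC wC; apply/negP => ruw.
have uw : u != w by apply: contraTneq ruw => ->; rewrite r_irr.
suff /long_aug : augmenting_path r M [:: u; w] by [].
split => //=; first by rewrite inE uw.
- by rewrite ruw.
- by rewrite !matchedE uC wC.
- by case=> //= _; apply/negbTE/(notin_matching_of_free uC); exact: set21.
Qed.

Lemma free_matched_free u x y w : free u -> free w -> [set x; y] \in M ->
  r u x -> r x y -> r y w -> u = w.
Proof.
move=> uC wC xyM rux rxy ryw; apply/eqP; apply: contraT => uw.
have covered z : z \in [set x; y] -> z \in cover M.
  by move=> zxy; apply/bigcupP; exists [set x; y].
have xC := covered x (set21 x y); have yC := covered y (set22 x y).
have neq_free a b : free a -> b \in cover M -> a != b.
  by move=> aC bC; apply: contraNneq aC => ->.
suff /long_aug : augmenting_path r M [:: u; x; y; w] by [].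
split => //=.
- have xy : x != y by apply: contraTneq rxy => ->; rewrite r_irr.
  rewrite !inE !negb_or uw xy (neq_free u x) // (neq_free u y) //.
  by rewrite (eq_sym x) (eq_sym y) (neq_free w x) // (neq_free w y).
- by rewrite rux rxy ryw.
- by rewrite !matchedE uC wC.
- case=> [|[|[|//]]] _ /=; last 1 first.
  + by apply/negbTE/(notin_matching_of_free wC); exact: set22.
  + by apply/negbTE/(notin_matching_of_free uC); exact: set21.
  + exact: xyM.
Qed.

Lemma sum_free_nbrs_matched_edge A : A \in M ->
  exists w, \sum_(v in A) #|nbrs r v :&: ~: cover M| <= #|nbrs r w|.
Proof.
move=> AM; have [x [y [rxy defA]]] := M_matching.1 A AM.
have xyM : [set x; y] \in M by rewrite -defA.
have xy : x != y by apply: contraTneq rxy => ->; rewrite r_irr.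
pose F v := nbrs r v :&: ~: cover M.
have inF v u : (u \in F v) = r v u && free u by rewrite !inE.
rewrite defA big_setU1 ?inE //= big_set1 -/(F x) -/(F y).
have [Fx0 | [u]] := set_0Vmem (F x).
  by exists y; rewrite Fx0 cards0 add0n subset_leq_card ?subsetIl.
have [Fy0 | [w]] := set_0Vmem (F y).
  by exists x; rewrite Fy0 cards0 addn0 subset_leq_card ?subsetIl.
rewrite !inF => /andP[ryw wC] /andP[rxu uC].
have uw : u = w by apply: free_matched_free xyM _ rxy ryw; rewrite // r_sym.
subst w.
have Fx_u : F x \subset [set u].
  apply/subsetP => u'; rewrite inF inE => /andP[rxu' u'C].
  by apply/eqP; apply: (free_matched_free u'C uC xyM _ rxy ryw); rewrite r_sym.
have Fy_u : F y \subset [set u].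
  apply/subsetP => w'; rewrite inF inE => /andP[ryw' w'C].
  by rewrite eq_sym; apply/eqP; apply: (free_matched_free uC w'C xyM _ rxy ryw'); rewrite r_sym.
exists u; apply: (@leq_trans #|[set x; y]|).
  rewrite cards2 xy; apply: (leq_add (n1 := 1) (n2 := 1));
  by rewrite -(cards1 u); exact: subset_leq_card.
by apply/subset_leq_card/subsetP => z /set2P[] ->; rewrite inE r_sym.
Qed.

Lemma sum_deg_free_le (R : numDomainType) (d : R) :
  (forall w, (#|nbrs r w|%:R <= d)%R) ->
  ((\sum_(u in ~: cover M) #|nbrs r u|)%:R <= #|M|%:R * d)%R.
Proof.
move=> deg_le.
have -> : \sum_(u in ~: cover M) #|nbrs r u| =
          \sum_(u in ~: cover M) #|nbrs r u :&: cover M|.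
  apply: eq_bigr => u; rewrite inE => uC.
  suff /setIidPl -> : nbrs r u \subset cover M by [].
  apply/subsetP => v; rewrite inE => ruv.
  by apply: contraLR ruv => vC; exact: free_nonadj.
rewrite sum_card_nbrsI // big_trivIset; last exact: matching_trivIset M_matching.
rewrite natr_sum mulr_natl -sumr_const; apply: ler_sum => A AM.
have [w le_w] := sum_free_nbrs_matched_edge AM.
by apply: le_trans (deg_le w); rewrite ler_nat.
Qed.

End NoShortAugmentingPath.

Section KernelMatching.

Variables (R : realFieldType) (T : finType) (e ke : rel T) (tight : {set T}).
Variables (eps c : R) (M : {set {set T}}).
Hypotheses (e_irr : irreflexive e) (kernel : is_kernel e ke tight eps c)
  (M_matching : is_matching ke M)
  (long_aug : forall p, augmenting_path ke M p -> 5 <= (size p).-1).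

Let ke_sym : symmetric ke. Proof. by case: kernel. Qed.

Let ke_irr : irreflexive ke.
Proof. by case: kernel => _ ke_sub _ _ _ u; apply/negP => /ke_sub; rewrite e_irr. Qed.

Lemma card_free_tight_le : (0 < c)%R ->
  (#|~: cover M :&: tight|%:R * (1 - eps) <= #|M|%:R * (1 + eps))%R.
Proof.
move=> c_gt0; case: kernel => _ _ deg_up deg_low _.
rewrite -(ler_pM2r c_gt0) -!mulrA.
apply: le_trans (sum_deg_free_le ke_sym ke_irr M_matching long_aug deg_up).
apply: (@le_trans _ _ ((\sum_(u in ~: cover M :&: tight) #|nbrs ke u|)%:R)%R).
  rewrite natr_sum mulr_natl -sumr_const; apply: ler_sum => u.
  by rewrite inE => /andP[_]; exact: deg_low.
by rewrite ler_nat [X in _ <= X](big_setID tight) leq_addr.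
Qed.

Lemma card_matching_le M' : is_matching e M' ->
  #|M'| <= 2 * #|M| + #|~: cover M :&: tight|.
Proof.
move=> M'_matching; case: kernel => _ _ _ _ slack_ke.
apply: leq_trans (leq_add (card_cover_matching M_matching) (leqnn _)).
apply: leq_trans (leq_card_setU _ _).1.
apply: trivIset_card_le (matching_trivIset M'_matching) _ => A.
case/M'_matching.1 => u [v [euv ->]]; apply/set0Pn.
case: (boolP (u \in cover M)) => uC; first by exists u; rewrite !inE eqxx uC.
case: (boolP (v \in cover M)) => vC; first by exists v; rewrite !inE eqxx orbT vC.
case: (boolP (u \in tight)) => ut; first by exists u; rewrite !inE eqxx uC ut orbT.
case: (boolP (v \in tight)) => vt; first by exists v; rewrite !inE eqxx vC vt !orbT.
by move: (free_nonadj ke_irr long_aug uC vC); rewrite slack_ke.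
Qed.

End KernelMatching.

Lemma ratio_le_1D3eps (R : realFieldType) (eps a m : R) :
  (0 <= eps)%R -> (eps < 1 / 3)%R -> (0 <= m)%R ->
  (a * (1 - eps) <= m * (1 + eps))%R -> (a <= (1 + 3 * eps) * m)%R.
Proof.
move=> eps_ge0 eps_lt m_ge0 le_a.
have : (0 <= eps * (1 - 3 * eps) * m)%R by rewrite !mulr_ge0 //; lra.
nra.
Qed.

Theorem theorem3p10 (R : realFieldType) (T : finType) (e ke : rel T)
    (tight : {set T}) (eps c : R) (M : {set {set T}}) :
  is_graph e ->
  (1 <= c)%R -> (0 <= eps)%R -> (eps < 1 / 3)%R ->
  is_kernel e ke tight eps c ->
  is_matching ke M ->
  (forall p : seq T, augmenting_path ke M p -> 5 <= (size p).-1) ->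
  forall M' : {set {set T}}, is_matching e M' ->
    (#|M'|%:R <= (3 + 3 * eps) * #|M|%:R)%R.
Proof.
move=> [_ e_irr] c_ge1 eps_ge0 eps_lt kernel M_matching long_aug M' M'_matching.
have c_gt0 : (0 < c)%R by apply: lt_le_trans c_ge1.
have := card_free_tight_le e_irr kernel M_matching long_aug c_gt0.
move/(ratio_le_1D3eps eps_ge0 eps_lt (ler0n _ _)) => free_tight_le.
have := card_matching_le e_irr kernel M_matching long_aug M'_matching.
rewrite -(ler_nat R) natrD natrM => M'_le.
lra.
Qed.
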